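(* The action map $\Omega_u\times Int(P)\to\Omega_u$, $(A,a)\mapsto Aa$, is open.
   Context: Standing assumptions: $G$ is a second countable locally compact group with left Haar measure $dg$; $P\subset G$ is a closed subsemigroup with identity $e\in P$, such that $G=PP^{-1}$ and the interior $Int(P)$ of $P$ is dense in $P$. $\mathcal{C}(G)$ denotes the space of closed subsets of $G$ with the Vietoris (Fell) topology, a compact metrisable topology in which, for a metric $d$ on $G$ compatible with its topology, a sequence $A_n$ converges to $A$ iff $\{x:\limsup_n d(x,A_n)=0\}=\{x:\liminf_n d(x,A_n)=0\}=A$. $\Omega_u:=\{A\in\mathcal{C}(G): P^{-1}\subset A,\ P^{-1}A\subset A\}$, a compact subspace of $\mathcal{C}(G)$, with right $P$-action $A\cdot a=Aa=\{xa:x\in A\}$. *)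

From Stdlib Require Import List.
Import ListNotations.

Section Topology.
Variable X : Type.
Variable opens : (X -> Prop) -> Prop.

Definition is_topology : Prop :=
  opens (fun _ => True) /\
  (forall F : (X -> Prop) -> Prop,
      (forall U, F U -> opens U) -> opens (fun x => exists U, F U /\ U x)) /\
  (forall U V, opens U -> opens V -> opens (fun x => U x /\ V x)).

Definition is_closed (A : X -> Prop) : Prop := opens (fun x => ~ A x).

Definition interior (A : X -> Prop) : X -> Prop :=
  fun x => exists U, opens U /\ U x /\ (forall y, U y -> A y).

Definition closure (A : X -> Prop) : X -> Prop :=
  fun x => forall U, opens U -> U x -> exists y, U y /\ A y.

Definition compact (K : X -> Prop) : Prop :=
  forall C : (X -> Prop) -> Prop,
    (forall U, C U -> opens U) ->
    (forall x, K x -> exists U, C U /\ U x) ->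
    exists l : list (X -> Prop),
      (forall U, In U l -> C U) /\
      (forall x, K x -> exists U, In U l /\ U x).

Definition hausdorff : Prop :=
  forall x y, x <> y -> exists U V, opens U /\ opens V /\ U x /\ V y /\
     (forall z, U z -> V z -> False).

Definition locally_compact : Prop :=
  forall x, exists U K, opens U /\ U x /\ (forall y, U y -> K y) /\ compact K.

Definition second_countable : Prop :=
  exists B : nat -> X -> Prop, (forall n, opens (B n)) /\
    forall U x, opens U -> U x -> exists n, B n x /\ (forall y, B n y -> U y).
End Topology.

Arguments is_closed {X} opens A.
Arguments interior {X} opens A _.
Arguments closure {X} opens A _.
Arguments compact {X} opens K.

Definition prod_opens {X Y : Type} (oX : (X -> Prop) -> Prop) (oY : (Y -> Prop) -> Prop)
  (W : X * Y -> Prop) : Prop :=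
  forall p, W p -> exists U V, oX U /\ oY V /\ U (fst p) /\ V (snd p) /\
     (forall x y, U x -> V y -> W (x, y)).

Definition is_lcsc_group (G : Type) (mul : G -> G -> G) (inv : G -> G) (e : G)
  (opens : (G -> Prop) -> Prop) : Prop :=
  (forall x y z, mul x (mul y z) = mul (mul x y) z) /\
  (forall x, mul e x = x) /\ (forall x, mul x e = x) /\
  (forall x, mul (inv x) x = e) /\ (forall x, mul x (inv x) = e) /\
  is_topology G opens /\
  (forall x y U, opens U -> U (mul x y) ->
     exists V1 V2, opens V1 /\ opens V2 /\ V1 x /\ V2 y /\
       (forall x' y', V1 x' -> V2 y' -> U (mul x' y'))) /\
  (forall x U, opens U -> U (inv x) ->
     exists V, opens V /\ V x /\ (forall x', V x' -> U (inv x'))) /\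
  hausdorff G opens /\ locally_compact G opens /\ second_countable G opens.

Definition standing_P (G : Type) (mul : G -> G -> G) (inv : G -> G) (e : G)
  (opens : (G -> Prop) -> Prop) (P : G -> Prop) : Prop :=
  is_closed opens P /\ P e /\
  (forall x y, P x -> P y -> P (mul x y)) /\
  (forall g, exists p q, P p /\ P q /\ g = mul p (inv q)) /\
  (forall x, P x -> closure opens (interior opens P) x).

(* Fell (Vietoris) topology on the closed subsets of G, defined on all
   subsets (only closed ones will be considered). *)
Definition fell_subbasic {G : Type} (opens : (G -> Prop) -> Prop)
  (S : (G -> Prop) -> Prop) : Prop :=
  (exists K, compact opens K /\
     forall A, S A <-> (forall x, K x -> A x -> False)) \/
  (exists U, opens U /\ forall A, S A <-> (exists x, U x /\ A x)).

Definition fell_opens {G : Type} (opens : (G -> Prop) -> Prop)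
  (W : (G -> Prop) -> Prop) : Prop :=
  forall A, W A -> exists l : list ((G -> Prop) -> Prop),
    (forall S, In S l -> fell_subbasic opens S /\ S A) /\
    (forall B, (forall S, In S l -> S B) -> W B).

Definition Omega_u {G : Type} (mul : G -> G -> G) (inv : G -> G)
  (opens : (G -> Prop) -> Prop) (P : G -> Prop) (A : G -> Prop) : Prop :=
  is_closed opens A /\
  (forall p, P p -> A (inv p)) /\
  (forall p x, P p -> A x -> A (mul (inv p) x)).

Definition rtrans {G : Type} (mul : G -> G -> G) (A : G -> Prop) (a : G) : G -> Prop :=
  fun y => exists x, A x /\ y = mul x a.

From Stdlib Require Import List Classical FunctionalExtensionality PropExtensionality.
Import ListNotations.

(* The action is open because it is undone by (C, a) |-> C a^-1: if this map
   carries a basic Fell neighbourhood of A0 a0 times a neighbourhood of a0 into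
   the neighbourhood of A0 allowed by O, then every C in Omega_u near A0 a0
   that hits a small neighbourhood of a0 inside Int(P), say at a, equals
   (C a^-1) a with C a^-1 in Omega_u.  Continuity of (C, a) |-> C a^-1 at
   (A0 a0, a0) is checked on subbasic sets: "hits U" follows from continuity of
   the group operations, "misses K" from local compactness and the Hausdorff
   property of G together with compactness of K. *)

Lemma pred_ext {T : Type} (A B : T -> Prop) : (forall x, A x <-> B x) -> A = B.
Proof.
  intros H; apply functional_extensionality; intros x.
  apply propositional_extensionality, H.
Qed.

Lemma list_filter_prop {A : Type} (Q : A -> Prop) (l : list A) :
  exists l', forall x, In x l' <-> In x l /\ Q x.
Proof.
  induction l as [|a l [l' Hl']].
  - exists []; simpl; tauto.
  - destruct (classic (Q a)) as [Qa|nQa].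
    + exists (a :: l'); intros x; simpl; rewrite Hl'.
      split; [intros [<-|?]|intros [[<-|?] ?]]; tauto.
    + exists l'; intros x; simpl; rewrite Hl'.
      split; [tauto|intros [[<-|?] ?]; tauto].
Qed.

Lemma list_choice {A B : Type} (R : A -> B -> Prop) (l : list A) :
  (forall a, In a l -> exists b, R a b) ->
  exists l', (forall a, In a l -> exists b, In b l' /\ R a b) /\
             (forall b, In b l' -> exists a, In a l /\ R a b).
Proof.
  induction l as [|a l IH]; intros H.
  - exists []; simpl; split; tauto.
  - destruct IH as [l' [Hl Hl']]; [intros x Hx; apply H; now right|].
    destruct (H a (or_introl eq_refl)) as [b Rab].
    exists (b :: l'); split.
    + intros x [<-|Hx]; [exists b; simpl; auto|].
      destruct (Hl x Hx) as [y [Hy Rxy]]; exists y; simpl; auto.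
    + intros y [<-|Hy]; [exists a; simpl; auto|].
      destruct (Hl' y Hy) as [x [Hx Rxy]]; exists x; simpl; auto.
Qed.

Definition bigcap_list {T : Type} (l : list (T -> Prop)) (x : T) : Prop :=
  forall S, In S l -> S x.

Lemma bigcap_list_nil {T : Type} : bigcap_list (@nil (T -> Prop)) = fun _ => True.
Proof. apply pred_ext; intros x; split; [tauto|intros _ S []]. Qed.

Lemma bigcap_list_cons {T : Type} (S : T -> Prop) l :
  bigcap_list (S :: l) = fun x => S x /\ bigcap_list l x.
Proof.
  apply pred_ext; intros x; split.
  - intros H; split; [apply H; now left|intros U HU; apply H; now right].
  - intros [Sx Hl] U [<-|HU]; [exact Sx|exact (Hl U HU)].
Qed.

Section TopologyFacts.
Variables (X : Type) (opens : (X -> Prop) -> Prop).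

Lemma compact_inter_closed K F :
  compact opens K -> is_closed opens F -> compact opens (fun x => K x /\ F x).
Proof.
  intros HK HF C HC Hcov.
  destruct (HK (fun U => C U \/ U = fun x => ~ F x)) as [l [Hl Hlcov]].
  - intros U [CU| ->]; auto.
  - intros x Kx; destruct (classic (F x)) as [Fx|nFx].
    + destruct (Hcov x (conj Kx Fx)) as [U [CU Ux]]; eauto.
    + exists (fun x => ~ F x); auto.
  - destruct (list_filter_prop C l) as [l' Hl'].
    exists l'; split; [intros U HU; apply Hl', HU|].
    intros x [Kx Fx]; destruct (Hlcov x Kx) as [U [HU Ux]].
    destruct (Hl U HU) as [CU| ->]; [|contradiction].
    exists U; split; [apply Hl'|]; auto.
Qed.

Hypothesis Ht : is_topology X opens.

Lemma open_full : opens (fun _ => True).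
Proof. apply Ht. Qed.

Lemma open_inter U V : opens U -> opens V -> opens (fun x => U x /\ V x).
Proof. apply Ht. Qed.

Lemma open_union (F : (X -> Prop) -> Prop) :
  (forall U, F U -> opens U) -> opens (fun x => exists U, F U /\ U x).
Proof. apply Ht. Qed.

Lemma open_bigcap_list l : (forall U, In U l -> opens U) -> opens (bigcap_list l).
Proof.
  induction l as [|U l IH]; intros Hl.
  - rewrite bigcap_list_nil; apply open_full.
  - rewrite bigcap_list_cons; apply open_inter; [apply Hl; now left|].
    apply IH; intros V HV; apply Hl; now right.
Qed.

Lemma open_of_locally_open S :
  (forall x, S x -> exists U, opens U /\ U x /\ forall y, U y -> S y) -> opens S.
Proof.
  intros H.
  replace S with (fun x => exists U, (opens U /\ forall y, U y -> S y) /\ U x).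
  - apply open_union; intros U [HU _]; exact HU.
  - apply pred_ext; intros x; split.
    + intros [U [[_ HUS] Ux]]; auto.
    + intros Sx; destruct (H x Sx) as [U [HU [Ux HUS]]]; eauto.
Qed.

Hypothesis Hh : hausdorff X opens.

Lemma compact_separated_from_point M g : compact opens M -> ~ M g ->
  exists Y Z, opens Y /\ opens Z /\ Y g /\ (forall y, M y -> Z y) /\
              (forall z, Y z -> Z z -> False).
Proof.
  intros HM Mg.
  set (apart := fun V U => opens U /\ U g /\ forall z, U z -> V z -> False).
  destruct (HM (fun V => opens V /\ exists U, apart V U)) as [l [Hl Hlcov]].
  - intros V [HV _]; exact HV.
  - intros x Mx.
    destruct (Hh g x) as [U [V [HU [HV [Ug [Vx HUV]]]]]]; [congruence|].
    exists V; repeat split; auto; exists U; repeat split; auto.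
  - destruct (list_choice apart l) as [l' [Hll' Hl'l]].
    { intros V HV; apply (Hl V HV). }
    exists (bigcap_list l'), (fun z => exists V, In V l /\ V z); repeat split.
    + apply open_bigcap_list; intros U HU.
      destruct (Hl'l U HU) as [V [_ [HU' _]]]; exact HU'.
    + apply open_union; intros V HV; apply (Hl V HV).
    + intros U HU; destruct (Hl'l U HU) as [V [_ [_ [Ug _]]]]; exact Ug.
    + intros y My; destruct (Hlcov y My) as [V [HV Vy]]; eauto.
    + intros z Yz [V [HV Vz]].
      destruct (Hll' V HV) as [U [HU [_ [_ HUV]]]].
      exact (HUV z (Yz U HU) Vz).
Qed.

End TopologyFacts.

Definition hits {G : Type} (U : G -> Prop) (A : G -> Prop) : Prop :=
  exists x, U x /\ A x.

Definition misses {G : Type} (K : G -> Prop) (A : G -> Prop) : Prop :=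
  forall x, K x -> A x -> False.

Definition fell_basic_at {G : Type} (opens : (G -> Prop) -> Prop)
  (l : list ((G -> Prop) -> Prop)) (A : G -> Prop) : Prop :=
  forall S, In S l -> fell_subbasic opens S /\ S A.

Lemma fell_subbasic_hits {G : Type} (opens : (G -> Prop) -> Prop) U :
  opens U -> fell_subbasic opens (hits U).
Proof. intros HU; right; exists U; split; [exact HU|reflexivity]. Qed.

Lemma fell_subbasic_misses {G : Type} (opens : (G -> Prop) -> Prop) K :
  compact opens K -> fell_subbasic opens (misses K).
Proof. intros HK; left; exists K; split; [exact HK|reflexivity]. Qed.

Lemma fell_opens_relative_interior {G : Type} (opens : (G -> Prop) -> Prop)
  (Q T : (G -> Prop) -> Prop) :
  fell_opens opens
    (fun B => exists l, fell_basic_at opens l B /\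
       forall C, bigcap_list l C -> Q C -> T C).
Proof.
  intros B [l [Hl HlT]]; exists l; split; [exact Hl|].
  intros B' HB'; exists l; split; [|exact HlT].
  intros S HS; split; [apply (Hl S HS)|apply (HB' S HS)].
Qed.
Section Group.
Variables (G : Type) (mul : G -> G -> G) (inv : G -> G) (e : G)
  (opens : (G -> Prop) -> Prop).
Hypothesis HG : is_lcsc_group G mul inv e opens.

Lemma mulA x y z : mul x (mul y z) = mul (mul x y) z.
Proof. apply HG. Qed.

Lemma mul1g x : mul e x = x.
Proof. apply HG. Qed.

Lemma mulg1 x : mul x e = x.
Proof. apply HG. Qed.

Lemma mulVg x : mul (inv x) x = e.
Proof. apply HG. Qed.

Lemma mulgV x : mul x (inv x) = e.
Proof. apply HG. Qed.

Lemma group_topology : is_topology G opens.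
Proof. apply HG. Qed.

Lemma mul_continuous x y U : opens U -> U (mul x y) ->
  exists V1 V2, opens V1 /\ opens V2 /\ V1 x /\ V2 y /\
    forall x' y', V1 x' -> V2 y' -> U (mul x' y').
Proof. apply HG. Qed.

Lemma inv_continuous x U : opens U -> U (inv x) ->
  exists V, opens V /\ V x /\ forall x', V x' -> U (inv x').
Proof. apply HG. Qed.

Lemma group_hausdorff : hausdorff G opens.
Proof. apply HG. Qed.

Lemma group_locally_compact : locally_compact G opens.
Proof. apply HG. Qed.

Lemma mulgK x a : mul (mul x a) (inv a) = x.
Proof. now rewrite <- mulA, mulgV, mulg1. Qed.

Lemma mulgVK x a : mul (mul x (inv a)) a = x.
Proof. now rewrite <- mulA, mulVg, mulg1. Qed.

Lemma inv1 : inv e = e.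
Proof. now rewrite <- (mulg1 (inv e)), mulVg. Qed.

Lemma rtrans_mem A a x : A x -> rtrans mul A a (mul x a).
Proof. intros Ax; exists x; auto. Qed.

Lemma rtrans_memV A a x : rtrans mul A a (mul x a) -> A x.
Proof.
  intros [y [Ay Hy]].
  apply (f_equal (fun z => mul z (inv a))) in Hy; rewrite !mulgK in Hy.
  now subst.
Qed.

Lemma rtransK C a y : rtrans mul (rtrans mul C (inv a)) a y <-> C y.
Proof.
  split.
  - intros [x [[c [Cc ->]] ->]]; now rewrite mulgVK.
  - intros Cy; rewrite <- (mulgVK y a); apply rtrans_mem, rtrans_mem, Cy.
Qed.

Lemma rtrans_closed A a : is_closed opens A -> is_closed opens (rtrans mul A a).
Proof.
  intros HA; apply (open_of_locally_open _ _ group_topology); intros y Hy.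
  assert (Hya : ~ A (mul y (inv a))).
  { intros H; apply Hy; rewrite <- (mulgVK y a); now apply rtrans_mem. }
  destruct (mul_continuous y (inv a) _ HA Hya)
    as [V1 [V2 [HV1 [HV2 [V1y [V2a Hm]]]]]].
  exists V1; repeat split; auto.
  intros y' V1y' [x [Ax ->]]; apply (Hm _ (inv a) V1y' V2a).
  now rewrite mulgK.
Qed.

Definition untranslate_near (B0 : G -> Prop) (a0 : G) (T : (G -> Prop) -> Prop) :=
  exists l W, fell_basic_at opens l B0 /\ opens W /\ W a0 /\
    forall C a, bigcap_list l C -> W a -> T (rtrans mul C (inv a)).

Lemma untranslate_near_full B0 a0 : untranslate_near B0 a0 (fun _ => True).
Proof.
  exists [], (fun _ => True); split; [intros S []|].
  split; [apply open_full, group_topology|auto].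
Qed.

Lemma untranslate_near_mono B0 a0 (T1 T2 : (G -> Prop) -> Prop) :
  untranslate_near B0 a0 T1 -> (forall A, T1 A -> T2 A) -> untranslate_near B0 a0 T2.
Proof.
  intros [l [W [Hl [HW [Wa HT]]]]] H12.
  exists l, W; split; [exact Hl|split; [exact HW|split; [exact Wa|]]].
  intros C a HC Wa'; apply H12, HT; auto.
Qed.

Lemma untranslate_near_inter B0 a0 T1 T2 :
  untranslate_near B0 a0 T1 -> untranslate_near B0 a0 T2 ->
  untranslate_near B0 a0 (fun A => T1 A /\ T2 A).
Proof.
  intros [l1 [W1 [Hl1 [HW1 [W1a H1]]]]] [l2 [W2 [Hl2 [HW2 [W2a H2]]]]].
  exists (l1 ++ l2), (fun x => W1 x /\ W2 x); split; [|split; [|split]].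
  - intros S HS; apply in_app_or in HS as [HS|HS]; auto.
  - apply open_inter; auto; apply group_topology.
  - auto.
  - intros C a HC [W1a' W2a']; split; [apply H1|apply H2]; auto;
      intros S HS; apply HC, in_or_app; auto.
Qed.

Lemma untranslate_near_bigcap {I : Type} B0 a0 (T : I -> (G -> Prop) -> Prop) l :
  (forall i, In i l -> untranslate_near B0 a0 (T i)) ->
  untranslate_near B0 a0 (fun A => forall i, In i l -> T i A).
Proof.
  induction l as [|i l IH]; intros Hl.
  - apply (untranslate_near_mono _ _ _ _ (untranslate_near_full B0 a0)).
    intros A _ i [].
  - apply (untranslate_near_mono _ _ _ _
      (untranslate_near_inter _ _ _ _ (Hl i (or_introl eq_refl))
         (IH (fun j Hj => Hl j (or_intror Hj))))).
    intros A [HA HlA] j [<-|Hj]; auto.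
Qed.

Lemma untranslate_near_hits B0 a0 U : opens U -> (exists x, U x /\ B0 (mul x a0)) ->
  untranslate_near B0 a0 (hits U).
Proof.
  intros HU [x0 [Ux0 B0x0]].
  rewrite <- (mulgK x0 a0) in Ux0.
  destruct (mul_continuous _ _ U HU Ux0) as [V1 [V2 [HV1 [HV2 [V1x [V2a Hm]]]]]].
  destruct (inv_continuous a0 V2 HV2 V2a) as [W [HW [Wa HWV2]]].
  exists [hits V1], W; split; [|split; [exact HW|split; [exact Wa|]]].
  - intros S [<-|[]]; split; [apply fell_subbasic_hits, HV1|exists (mul x0 a0); auto].
  - intros C a HC Wa'; destruct (HC _ (or_introl eq_refl)) as [y [V1y Cy]].
    exists (mul y (inv a)); split; [apply Hm; auto|apply rtrans_mem, Cy].
Qed.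

(* A compact neighbourhood [Kg] of [k a0] splits into the part near [B0], which
   the whole translate of a small neighbourhood of [k] avoids, and the compact
   part [L] away from [B0], which nearby closed sets must miss. *)
Lemma untranslate_near_misses_at B0 a0 k : is_closed opens B0 -> ~ B0 (mul k a0) ->
  exists Q, opens Q /\ Q k /\ untranslate_near B0 a0 (misses Q).
Proof.
  intros HB0 nB0k.
  pose proof group_topology as Ht.
  destruct (group_locally_compact (mul k a0)) as [Ug [Kg [HUg [Ugk [HUK HKg]]]]].
  destruct (compact_separated_from_point _ _ Ht group_hausdorff
              (fun y => Kg y /\ B0 y) (mul k a0)) as [Y [Z [HY [HZ [Yk [HMZ HYZ]]]]]].
  { now apply compact_inter_closed. }
  { intros [_ H]; contradiction. }
  set (L := fun y => Kg y /\ ~ Z y).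
  assert (HL : compact opens L).
  { apply compact_inter_closed; [exact HKg|].
    unfold is_closed; replace (fun x => ~ ~ Z x) with Z; [exact HZ|].
    apply pred_ext; intros x; split; [tauto|apply NNPP]. }
  destruct (mul_continuous k a0 _ (open_inter _ _ Ht _ _ HUg HY) (conj Ugk Yk))
    as [V1 [V2 [HV1 [HV2 [V1k [V2a Hm]]]]]].
  exists V1; split; [exact HV1|split; [exact V1k|]].
  exists [misses L], V2; split; [|split; [exact HV2|split; [exact V2a|]]].
  - intros S [<-|[]]; split; [now apply fell_subbasic_misses|].
    intros y [Kgy nZy] B0y; apply nZy, HMZ; auto.
  - intros C a HC V2a' x V1x [c [Cc ->]].
    destruct (Hm _ _ V1x V2a') as [Ugc Yc]; rewrite mulgVK in Ugc, Yc.
    apply (HC _ (or_introl eq_refl) c); [split; [auto|]|exact Cc].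
    intros Zc; exact (HYZ c Yc Zc).
Qed.

Lemma untranslate_near_misses B0 a0 K : is_closed opens B0 -> compact opens K ->
  (forall k, K k -> ~ B0 (mul k a0)) -> untranslate_near B0 a0 (misses K).
Proof.
  intros HB0 HK HKB0.
  destruct (HK (fun Q => opens Q /\ untranslate_near B0 a0 (misses Q))) as [l [Hl Hlcov]].
  - intros Q [HQ _]; exact HQ.
  - intros k Kk; destruct (untranslate_near_misses_at B0 a0 k HB0 (HKB0 k Kk))
      as [Q [HQ [Qk HQnear]]]; eauto.
  - apply (untranslate_near_mono _ _ _ _
      (untranslate_near_bigcap B0 a0 (fun Q => misses Q) l (fun Q HQ => proj2 (Hl Q HQ)))).
    intros A HA x Kx Ax; destruct (Hlcov x Kx) as [Q [HQ Qx]]; exact (HA Q HQ x Qx Ax).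
Qed.

Lemma untranslate_near_subbasic A0 a0 S : is_closed opens A0 ->
  fell_subbasic opens S -> S A0 -> untranslate_near (rtrans mul A0 a0) a0 S.
Proof.
  intros HA0 [[K [HK HS]]|[U [HU HS]]] SA0.
  - apply (untranslate_near_mono _ _ (misses K)); [|intros A; apply HS].
    apply untranslate_near_misses; [now apply rtrans_closed|exact HK|].
    intros k Kk Hk; exact (proj1 (HS A0) SA0 k Kk (rtrans_memV _ _ _ Hk)).
  - apply (untranslate_near_mono _ _ (hits U)); [|intros A; apply HS].
    apply untranslate_near_hits; [exact HU|].
    destruct (proj1 (HS A0) SA0) as [x [Ux A0x]]; exists x; split; [exact Ux|].
    now apply rtrans_mem.
Qed.

Lemma untranslate_near_basic A0 a0 l : is_closed opens A0 ->
  fell_basic_at opens l A0 -> untranslate_near (rtrans mul A0 a0) a0 (bigcap_list l).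
Proof.
  intros HA0 Hl.
  apply (untranslate_near_bigcap _ _ (fun S => S)); intros S HS.
  apply untranslate_near_subbasic; apply Hl in HS as [HS SA0]; auto.
Qed.

Variable P : G -> Prop.

Lemma Omega_u_rtrans A a : P a -> Omega_u mul inv opens P A ->
  Omega_u mul inv opens P (rtrans mul A a).
Proof.
  intros Pa [HA [HAP HAi]]; split; [now apply rtrans_closed|split].
  - intros p Pp; rewrite <- (mulgVK (inv p) a); apply rtrans_mem, HAi, HAP; auto.
  - intros p x Pp [y [Ay ->]]; rewrite mulA; apply rtrans_mem, HAi; auto.
Qed.

Lemma Omega_u_rtrans_inv C a : C a -> Omega_u mul inv opens P C ->
  Omega_u mul inv opens P (rtrans mul C (inv a)).
Proof.
  intros Ca [HC [_ HCi]]; split; [now apply rtrans_closed|split].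
  - intros p Pp; rewrite <- (mulgK (inv p) a); apply rtrans_mem, HCi; auto.
  - intros p x Pp [y [Cy ->]]; rewrite mulA; apply rtrans_mem, HCi; auto.
Qed.

Lemma Omega_u_unit A : P e -> Omega_u mul inv opens P A -> A e.
Proof. intros Pe [_ [HAP _]]; rewrite <- inv1; auto. Qed.

Definition action_image (O : (G -> Prop) * G -> Prop) (B : G -> Prop) : Prop :=
  exists A a, Omega_u mul inv opens P A /\ interior opens P a /\ O (A, a) /\
    forall y, B y <-> rtrans mul A a y.

Lemma action_image_nbhd O A0 a0 : P e -> prod_opens (fell_opens opens) opens O ->
  Omega_u mul inv opens P A0 -> interior opens P a0 -> O (A0, a0) ->
  exists l, fell_basic_at opens l (rtrans mul A0 a0) /\
    forall C, bigcap_list l C -> Omega_u mul inv opens P C -> action_image O C.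
Proof.
  intros Pe HO HA0 [UP [HUP [UPa0 HUPP]]] OA0.
  destruct (HO _ OA0) as [UF [V [HUF [HV [UFA0 [Va0 HUFV]]]]]]; simpl in *.
  destruct (HUF A0 UFA0) as [l0 [Hl0 Hl0UF]].
  destruct (untranslate_near_basic A0 a0 l0 (proj1 HA0) Hl0)
    as [l [W [Hl [HW [Wa0 Hnear]]]]].
  set (N := fun x => V x /\ UP x /\ W x).
  assert (HN : opens N) by (pose proof group_topology; now repeat apply open_inter).
  exists (hits N :: l); split.
  - intros S [<-|HS]; [|now apply Hl].
    split; [now apply fell_subbasic_hits|].
    exists a0; split; [unfold N; auto|].
    rewrite <- (mul1g a0) at 2; apply rtrans_mem, (Omega_u_unit _ Pe HA0).
  - intros C HC HCO.
    destruct (HC _ (or_introl eq_refl)) as [a [[Va [UPa Wa]] Ca]].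
    exists (rtrans mul C (inv a)), a; split; [now apply Omega_u_rtrans_inv|].
    split; [exists UP; auto|split; [|intros y; symmetry; apply rtransK]].
    apply HUFV; [apply Hl0UF, Hnear|exact Va]; auto.
    intros S HS; apply HC; now right.
Qed.

End Group.

Theorem mainTheorem6 (G : Type) (mul : G -> G -> G) (inv : G -> G) (e : G)
  (opens : (G -> Prop) -> Prop) (P : G -> Prop)
  (HG : is_lcsc_group G mul inv e opens)
  (HP : standing_P G mul inv e opens P)
  (O : (G -> Prop) * G -> Prop)
  (HO : prod_opens (fell_opens opens) opens O) :
  exists V : (G -> Prop) -> Prop, fell_opens opens V /\
    forall B : G -> Prop,
      (exists A a, Omega_u mul inv opens P A /\ interior opens P a /\ O (A, a) /\
         (forall y, B y <-> rtrans mul A a y))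
      <-> (Omega_u mul inv opens P B /\ V B).
Proof.
  destruct HP as (_ & Pe & _).
  eexists; split; [apply (fell_opens_relative_interior opens
                      (Omega_u mul inv opens P) (action_image G mul inv opens P O))|].
  intros B; split.
  - intros (A0 & a0 & HA0 & Ha0 & OA0 & HB); apply pred_ext in HB; subst B.
    split.
    + destruct Ha0 as [U [_ [Ua0 HUP]]].
      exact (Omega_u_rtrans G mul inv e opens HG P A0 a0 (HUP a0 Ua0) HA0).
    + exact (action_image_nbhd G mul inv e opens HG P O A0 a0 Pe HO HA0 Ha0 OA0).
  - intros [HB [l [Hl Himage]]]; apply Himage; [intros S HS|exact HB].
    exact (proj2 (Hl S HS)).
Qed.
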